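(* Let $\Psi$ be a well-formed declarative context. (1) If $\Psi\vdash e\Leftarrow A$, then there is an unannotated term $e'$ such that $\Psi\vdash e':A$ and $e' =_{\beta\eta} |e|$. (2) If $\Psi\vdash e\Rightarrow A$, then there is an unannotated term $e'$ such that $\Psi\vdash e':A$ and $e'=_{\beta\eta}|e|$.
   Context: Types: $A,B,C ::= 1 \mid \alpha \mid \forall\alpha.A \mid A\to B$ (up to $\alpha$-renaming). Monotypes: $\sigma,\tau ::= 1 \mid \alpha \mid \sigma\to\tau$. Declarative contexts $\Psi ::= \cdot \mid \Psi,\alpha \mid \Psi,x:A$, no variable declared twice. Well-formedness $\Psi\vdash A$: $\Psi\vdash1$; $\Psi\vdash\alpha$ if $\alpha\in\Psi$; arrows componentwise; $\Psi\vdash\forall\alpha.A$ if $\Psi,\alpha\vdash A$. Declarative subtyping $\Psi\vdash A\le B$: least relation with $\alpha\in\Psi\Rightarrow\Psi\vdash\alpha\le\alpha$; $\Psi\vdash1\le1$; ($\Psi\vdash B_1\le A_1$, $\Psi\vdash A_2\le B_2$) $\Rightarrow\Psi\vdash A_1\to A_2\le B_1\to B_2$; ($\Psi\vdash\tau$, $\tau$ monotype, $\Psi\vdash[\tau/\alpha]A\le B$) $\Rightarrow\Psi\vdash\forall\alpha.A\le B$; ($\Psi,\beta\vdash A\le B$) $\Rightarrow\Psi\vdash A\le\forall\beta.B$. Annotated terms $e ::= x\mid()\mid\lambda x.e\mid e_1\,e_2\mid(e:A)$. Declarative bidirectional judgments $\Psi\vdash e\Leftarrow A$, $\Psi\vdash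 e\Rightarrow A$, $\Psi\vdash e\bullet A\Rightarrow\!\!\Rightarrow C$ defined mutually by: $(x:A)\in\Psi\Rightarrow\Psi\vdash x\Rightarrow A$; ($\Psi\vdash e\Rightarrow A$, $\Psi\vdash A\le B$) $\Rightarrow\Psi\vdash e\Leftarrow B$; ($\Psi\vdash A$, $\Psi\vdash e\Leftarrow A$) $\Rightarrow\Psi\vdash(e:A)\Rightarrow A$; $\Psi\vdash()\Leftarrow1$; $\Psi\vdash()\Rightarrow1$; $\Psi,\alpha\vdash e\Leftarrow A\Rightarrow\Psi\vdash e\Leftarrow\forall\alpha.A$; ($\Psi\vdash\tau$ monotype, $\Psi\vdash e\bullet[\tau/\alpha]A\Rightarrow\!\!\Rightarrow C$) $\Rightarrow\Psi\vdash e\bullet\forall\alpha.A\Rightarrow\!\!\Rightarrow C$; $\Psi,x:A\vdash e\Leftarrow B\Rightarrow\Psi\vdash\lambda x.e\Leftarrow A\to B$; ($\Psi\vdash\sigma\to\tau$ monotypes, $\Psi,x:\sigma\vdash e\Leftarrow\tau$) $\Rightarrow\Psi\vdash\lambda x.e\Rightarrow\sigma\to\tau$; ($\Psi\vdash e_1\Rightarrow A$, $\Psi\vdash e_2\bullet A\Rightarrow\!\!\Rightarrow C$) $\Rightarrow\Psi\vdash e_1\,e_2\Rightarrow C$; $\Psi\vdash e\Leftarrow A\Rightarrow\Psi\vdash e\bullet A\to C\Rightarrow\!\!\Rightarrow C$. Unannotated terms $t ::= x\mid()\mid\lambda x.t\mid t_1\,t_2$; type assignment $\Psi\vdash t:A$: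 variables from $\Psi$; $\Psi\vdash():1$; $\to$-introduction and elimination as in the simply typed $\lambda$-calculus; $\Psi,\alpha\vdash t:A\Rightarrow\Psi\vdash t:\forall\alpha.A$; ($\Psi\vdash t:\forall\alpha.A$, $\Psi\vdash\tau$ monotype) $\Rightarrow\Psi\vdash t:[\tau/\alpha]A$. $|e|$ is erasure of annotations ($|(e:A)|=|e|$, homomorphic otherwise); $=_{\beta\eta}$ is $\beta\eta$-equality of untyped $\lambda$-terms. *)

(* De Bruijn representation of types (hence alpha-equivalence
   is syntactic equality) and of term variables. *)
From Stdlib Require Import Arith List.
Import ListNotations.

Inductive ty : Type :=
| TUnit : ty
| TVar : nat -> ty
| TAll : ty -> ty             (* forall alpha. A, alpha = index 0 in body *)
| TArr : ty -> ty -> ty.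

Inductive mono : ty -> Prop :=
| mono_unit : mono TUnit
| mono_var : forall n, mono (TVar n)
| mono_arr : forall s t, mono s -> mono t -> mono (TArr s t).

Fixpoint ty_shift (c : nat) (A : ty) : ty :=
  match A with
  | TUnit => TUnit
  | TVar n => if n <? c then TVar n else TVar (S n)
  | TAll B => TAll (ty_shift (S c) B)
  | TArr B C => TArr (ty_shift c B) (ty_shift c C)
  end.

Fixpoint ty_subst (k : nat) (s : ty) (A : ty) : ty :=
  match A with
  | TUnit => TUnit
  | TVar n => if n <? k then TVar n else if n =? k then s else TVar (pred n)
  | TAll B => TAll (ty_subst (S k) (ty_shift 0 s) B)
  | TArr B C => TArr (ty_subst k s B) (ty_subst k s C)
  end.

(* [tau/alpha]A where A is the body of forall alpha. A *)
Definition ty_open (A tau : ty) : ty := ty_subst 0 tau A.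

(* head of the list = most recently added entry *)
Inductive entry : Type :=
| ETy : entry
| ETm : ty -> entry.

Definition ctx := list entry.

Fixpoint ntyvars (G : ctx) : nat :=
  match G with
  | [] => 0
  | ETy :: G' => S (ntyvars G')
  | ETm _ :: G' => ntyvars G'
  end.

Fixpoint wf_ty_n (n : nat) (A : ty) : Prop :=
  match A with
  | TUnit => True
  | TVar i => i < n
  | TAll B => wf_ty_n (S n) B
  | TArr B C => wf_ty_n n B /\ wf_ty_n n C
  end.

Definition wf_ty (G : ctx) (A : ty) : Prop := wf_ty_n (ntyvars G) A.

Fixpoint wf_ctx (G : ctx) : Prop :=
  match G with
  | [] => True
  | ETy :: G' => wf_ctx G'
  | ETm A :: G' => wf_ctx G' /\ wf_ty G' A
  end.

(* term variable lookup: index among term variables; the type is shifted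
   past type variables declared after it *)
Fixpoint lookup (G : ctx) (x : nat) : option ty :=
  match G with
  | [] => None
  | ETy :: G' => option_map (ty_shift 0) (lookup G' x)
  | ETm A :: G' => match x with 0 => Some A | S y => lookup G' y end
  end.

Inductive sub : ctx -> ty -> ty -> Prop :=
| sub_var : forall G n, n < ntyvars G -> sub G (TVar n) (TVar n)
| sub_unit : forall G, sub G TUnit TUnit
| sub_arr : forall G A1 A2 B1 B2,
    sub G B1 A1 -> sub G A2 B2 -> sub G (TArr A1 A2) (TArr B1 B2)
| sub_allL : forall G A B tau,
    wf_ty G tau -> mono tau -> sub G (ty_open A tau) B -> sub G (TAll A) B
| sub_allR : forall G A B,
    sub (ETy :: G) (ty_shift 0 A) B -> sub G A (TAll B).

Inductive tm : Type :=
| Var : nat -> tm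
| Unit : tm
| Lam : tm -> tm
| App : tm -> tm -> tm
| Anno : tm -> ty -> tm.

Fixpoint tm_tshift (c : nat) (e : tm) : tm :=
  match e with
  | Var x => Var x
  | Unit => Unit
  | Lam e1 => Lam (tm_tshift c e1)
  | App e1 e2 => App (tm_tshift c e1) (tm_tshift c e2)
  | Anno e1 A => Anno (tm_tshift c e1) (ty_shift c A)
  end.

Inductive chk : ctx -> tm -> ty -> Prop :=
| chk_sub : forall G e A B, syn G e A -> sub G A B -> chk G e B
| chk_unit : forall G, chk G Unit TUnit
| chk_all : forall G e A, chk (ETy :: G) (tm_tshift 0 e) A -> chk G e (TAll A)
| chk_lam : forall G e A B, chk (ETm A :: G) e B -> chk G (Lam e) (TArr A B)
with syn : ctx -> tm -> ty -> Prop :=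
| syn_var : forall G x A, lookup G x = Some A -> syn G (Var x) A
| syn_anno : forall G e A, wf_ty G A -> chk G e A -> syn G (Anno e A) A
| syn_unit : forall G, syn G Unit TUnit
| syn_lam : forall G e s t,
    wf_ty G (TArr s t) -> mono s -> mono t ->
    chk (ETm s :: G) e t -> syn G (Lam e) (TArr s t)
| syn_app : forall G e1 e2 A C, syn G e1 A -> appl G e2 A C -> syn G (App e1 e2) C
with appl : ctx -> tm -> ty -> ty -> Prop :=
| appl_all : forall G e A C tau,
    wf_ty G tau -> mono tau -> appl G e (ty_open A tau) C -> appl G e (TAll A) C
| appl_arr : forall G e A C, chk G e A -> appl G e (TArr A C) C.

Inductive utm : Type :=
| UVar : nat -> utm
| UUnit : utm
| ULam : utm -> utm
| UApp : utm -> utm -> utm.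

Inductive has_type : ctx -> utm -> ty -> Prop :=
| ht_var : forall G x A, lookup G x = Some A -> has_type G (UVar x) A
| ht_unit : forall G, has_type G UUnit TUnit
| ht_lam : forall G t A B, has_type (ETm A :: G) t B -> has_type G (ULam t) (TArr A B)
| ht_app : forall G t1 t2 A B,
    has_type G t1 (TArr A B) -> has_type G t2 A -> has_type G (UApp t1 t2) B
| ht_gen : forall G t A, has_type (ETy :: G) t A -> has_type G t (TAll A)
| ht_inst : forall G t A tau,
    has_type G t (TAll A) -> wf_ty G tau -> mono tau -> has_type G t (ty_open A tau).

Fixpoint erase (e : tm) : utm :=
  match e with
  | Var x => UVar x
  | Unit => UUnit
  | Lam e1 => ULam (erase e1)
  | App e1 e2 => UApp (erase e1) (erase e2)
  | Anno e1 _ => erase e1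
  end.

Fixpoint u_shift (c : nat) (t : utm) : utm :=
  match t with
  | UVar n => if n <? c then UVar n else UVar (S n)
  | UUnit => UUnit
  | ULam t1 => ULam (u_shift (S c) t1)
  | UApp t1 t2 => UApp (u_shift c t1) (u_shift c t2)
  end.

Fixpoint u_subst (k : nat) (s : utm) (t : utm) : utm :=
  match t with
  | UVar n => if n <? k then UVar n else if n =? k then s else UVar (pred n)
  | UUnit => UUnit
  | ULam t1 => ULam (u_subst (S k) (u_shift 0 s) t1)
  | UApp t1 t2 => UApp (u_subst k s t1) (u_subst k s t2)
  end.

Inductive beta_eta_eq : utm -> utm -> Prop :=
| bee_beta : forall t u, beta_eta_eq (UApp (ULam t) u) (u_subst 0 u t)
| bee_eta : forall t, beta_eta_eq (ULam (UApp (u_shift 0 t) (UVar 0))) t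
| bee_refl : forall t, beta_eta_eq t t
| bee_sym : forall t u, beta_eta_eq t u -> beta_eta_eq u t
| bee_trans : forall t u v, beta_eta_eq t u -> beta_eta_eq u v -> beta_eta_eq t v
| bee_lam : forall t u, beta_eta_eq t u -> beta_eta_eq (ULam t) (ULam u)
| bee_app : forall t1 t2 u1 u2,
    beta_eta_eq t1 u1 -> beta_eta_eq t2 u2 -> beta_eta_eq (UApp t1 t2) (UApp u1 u2).

(* Every declarative derivation elaborates into a Curry-style typing derivation of an
   erased term that differs from the erasure only by inserted coercions.  A subtyping
   derivation of A <= B yields a closed coercion of type A -> B that is beta-eta equal
   to the identity (arrows give the usual contravariant wrapper, quantifier rules give
   an eta-expansion that generalises or instantiates); it is inserted at each use of
   subsumption.  The application judgment e . A =>> C is read as a transformation of a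
   typed function of type A into a typed application of type C. *)

From Stdlib Require Import Arith List Lia.
Import ListNotations.

Fixpoint ntmvars (G : ctx) : nat :=
  match G with
  | [] => 0
  | ETy :: G' => ntmvars G'
  | ETm _ :: G' => S (ntmvars G')
  end.

Lemma ntyvars_insert_tm (G1 G2 : ctx) (C : ty) :
  ntyvars (G1 ++ ETm C :: G2) = ntyvars (G1 ++ G2).
Proof. induction G1 as [|[|] G1 IH]; simpl; auto. Qed.

Lemma lookup_insert_tm (G1 G2 : ctx) (C : ty) (x : nat) :
  lookup (G1 ++ ETm C :: G2) (if x <? ntmvars G1 then x else S x) =
  lookup (G1 ++ G2) x.
Proof.
  revert x; induction G1 as [|[|A] G1 IH]; intros x; simpl.
  - reflexivity.
  - rewrite IH. reflexivity.
  - destruct x as [|y]; simpl; [reflexivity|].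
    specialize (IH y). change (S y <? S (ntmvars G1)) with (y <? ntmvars G1).
    destruct (y <? ntmvars G1); exact IH.
Qed.

Lemma has_type_weaken_tm (G1 G2 : ctx) (C : ty) (t : utm) (A : ty) :
  has_type (G1 ++ G2) t A ->
  has_type (G1 ++ ETm C :: G2) (u_shift (ntmvars G1) t) A.
Proof.
  remember (G1 ++ G2) as G eqn:HG. intros Ht. revert G1 HG.
  induction Ht; intros G1 HG; subst; simpl.
  - pose proof (lookup_insert_tm G1 G2 C x) as Hl.
    destruct (x <? ntmvars G1); apply ht_var; rewrite Hl; assumption.
  - apply ht_unit.
  - apply ht_lam. apply (IHHt (ETm A :: G1)). reflexivity.
  - eapply ht_app; eauto.
  - apply ht_gen. apply (IHHt (ETy :: G1)). reflexivity.
  - eapply ht_inst; eauto. unfold wf_ty in *. rewrite ntyvars_insert_tm. assumption.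
Qed.

Fixpoint u_closed (n : nat) (t : utm) : Prop :=
  match t with
  | UVar x => x < n
  | UUnit => True
  | ULam t1 => u_closed (S n) t1
  | UApp t1 t2 => u_closed n t1 /\ u_closed n t2
  end.

Lemma u_closed_le (t : utm) (n m : nat) : u_closed n t -> n <= m -> u_closed m t.
Proof.
  revert n m; induction t; simpl; intros n' m Hc Hle.
  - lia.
  - exact I.
  - apply (IHt (S n')); [exact Hc | lia].
  - destruct Hc; split; eauto.
Qed.

Lemma u_shift_closed (t : utm) (n c : nat) : u_closed n t -> n <= c -> u_shift c t = t.
Proof.
  revert n c; induction t; simpl; intros n' c Hc Hle.
  - destruct (n <? c) eqn:E; auto. apply Nat.ltb_ge in E. lia.
  - reflexivity.
  - rewrite (IHt (S n') (S c)); auto; lia.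
  - destruct Hc. erewrite IHt1, IHt2; eauto.
Qed.

Lemma has_type_weaken_closed (G1 G2 : ctx) (C : ty) (t : utm) (A : ty) :
  u_closed 0 t -> has_type (G1 ++ G2) t A -> has_type (G1 ++ ETm C :: G2) t A.
Proof.
  intros Hc Ht. pose proof (has_type_weaken_tm G1 G2 C t A Ht) as Hw.
  rewrite (u_shift_closed t 0) in Hw; [exact Hw | exact Hc | lia].
Qed.

Definition uid : utm := ULam (UVar 0).

Lemma beta_eta_app_id (f u : utm) : beta_eta_eq f uid -> beta_eta_eq (UApp f u) u.
Proof.
  intros Hf. eapply bee_trans.
  - apply bee_app; [exact Hf | apply bee_refl].
  - apply bee_beta.
Qed.

(* Closedness lets a coercion be moved into any extended context unchanged. *)
Definition coercion (G : ctx) (A B : ty) (f : utm) : Prop :=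
  u_closed 0 f /\ has_type G f (TArr A B) /\ beta_eta_eq f uid.

Lemma coercion_refl (G : ctx) (A : ty) : coercion G A A uid.
Proof.
  repeat split; simpl; [lia | | apply bee_refl].
  apply ht_lam, ht_var. reflexivity.
Qed.

Lemma coercion_arr (G : ctx) (A1 A2 B1 B2 : ty) (f1 f2 : utm) :
  coercion G B1 A1 f1 -> coercion G A2 B2 f2 ->
  coercion G (TArr A1 A2) (TArr B1 B2)
    (ULam (ULam (UApp f2 (UApp (UVar 1) (UApp f1 (UVar 0)))))).
Proof.
  intros [c1 [t1 b1]] [c2 [t2 b2]].
  assert (Hlift : forall f T, u_closed 0 f -> has_type G f T ->
            has_type (ETm B1 :: ETm (TArr A1 A2) :: G) f T).
  { intros f T Hc Ht.
    apply (has_type_weaken_closed [] (ETm (TArr A1 A2) :: G)); [exact Hc|].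
    apply (has_type_weaken_closed [] G); assumption. }
  split; [|split].
  - simpl; repeat split; try lia; eapply u_closed_le; eauto; lia.
  - apply ht_lam, ht_lam. apply ht_app with A2; [apply Hlift; assumption|].
    apply ht_app with A1; [apply ht_var; reflexivity|].
    apply ht_app with B1; [apply Hlift; assumption | apply ht_var; reflexivity].
  - (* \g. \x. f2 (g (f1 x)) reduces to \g. \x. g x, the eta-expansion of the identity *)
    apply bee_lam. eapply bee_trans; [|apply (bee_eta (UVar 0))].
    apply bee_lam. eapply bee_trans; [apply beta_eta_app_id; exact b2|].
    apply bee_app; [apply bee_refl | apply beta_eta_app_id; exact b1].
Qed.

Lemma u_closed_eta (f : utm) :
  u_closed 0 f -> u_closed 0 (ULam (UApp f (UVar 0))).
Proof. intros Hc. simpl. split; [eapply u_closed_le; eauto | ]; lia. Qed.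

Lemma coercion_allL (G : ctx) (A B tau : ty) (f : utm) :
  wf_ty G tau -> mono tau -> coercion G (ty_open A tau) B f ->
  coercion G (TAll A) B (ULam (UApp f (UVar 0))).
Proof.
  intros Hwf Hmono [c [t b]]. split; [|split].
  - apply u_closed_eta. exact c.
  - apply ht_lam. apply ht_app with (ty_open A tau).
    + apply (has_type_weaken_closed [] G); assumption.
    + eapply ht_inst; [apply ht_var; reflexivity | exact Hwf | exact Hmono].
  - apply bee_lam, beta_eta_app_id. exact b.
Qed.

Lemma coercion_allR (G : ctx) (A B : ty) (f : utm) :
  coercion (ETy :: G) (ty_shift 0 A) B f ->
  coercion G A (TAll B) (ULam (UApp f (UVar 0))).
Proof.
  intros [c [t b]]. split; [|split].
  - apply u_closed_eta. exact c.
  - apply ht_lam, ht_gen. apply ht_app with (ty_shift 0 A).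
    + apply (has_type_weaken_closed [ETy] G); assumption.
    + apply ht_var. reflexivity.
  - apply bee_lam, beta_eta_app_id. exact b.
Qed.

Lemma sub_coercion (G : ctx) (A B : ty) : sub G A B -> exists f, coercion G A B f.
Proof.
  induction 1 as [G n _ | G | G A1 A2 B1 B2 _ [f1 H1] _ [f2 H2]
                 | G A B tau Hwf Hmono _ [f H] | G A B _ [f H]].
  - eexists. apply coercion_refl.
  - eexists. apply coercion_refl.
  - eexists. apply coercion_arr; eassumption.
  - eexists. eapply coercion_allL; eassumption.
  - eexists. apply coercion_allR. exact H.
Qed.

Lemma erase_tm_tshift (e : tm) (c : nat) : erase (tm_tshift c e) = erase e.
Proof. revert c; induction e; intros; simpl; congruence. Qed.

Definition elaborates (G : ctx) (e : tm) (A : ty) : Prop :=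
  exists e', has_type G e' A /\ beta_eta_eq e' (erase e).

Definition elaborates_appl (G : ctx) (e : tm) (A C : ty) : Prop :=
  forall t, has_type G t A ->
    exists t', has_type G t' C /\ beta_eta_eq t' (UApp t (erase e)).

Scheme chk_mut := Induction for chk Sort Prop
with syn_mut := Induction for syn Sort Prop
with appl_mut := Induction for appl Sort Prop.

Combined Scheme chk_syn_appl_mut from chk_mut, syn_mut, appl_mut.

Lemma bidirectional_elaborates :
  (forall G e A, chk G e A -> elaborates G e A) /\
  (forall G e A, syn G e A -> elaborates G e A) /\
  (forall G e A C, appl G e A C -> elaborates_appl G e A C).
Proof.
  apply chk_syn_appl_mut; unfold elaborates, elaborates_appl.
  - intros G e A B _ [e' [He' Hb]] Hsub.
    destruct (sub_coercion _ _ _ Hsub) as [f [_ [Hf Hfid]]].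
    exists (UApp f e'). split; [eapply ht_app; eassumption|].
    eapply bee_trans; [apply beta_eta_app_id; exact Hfid | exact Hb].
  - intros G. exists UUnit. split; [apply ht_unit | apply bee_refl].
  - intros G e A _ [e' [He' Hb]]. exists e'.
    rewrite erase_tm_tshift in Hb. split; [apply ht_gen|]; assumption.
  - intros G e A B _ [e' [He' Hb]]. exists (ULam e').
    split; [apply ht_lam; exact He' | apply bee_lam; exact Hb].
  - intros G x A Hx. exists (UVar x). split; [apply ht_var; exact Hx | apply bee_refl].
  - intros G e A _ _ [e' [He' Hb]]. exists e'. split; assumption.
  - intros G. exists UUnit. split; [apply ht_unit | apply bee_refl].
  - intros G e s t _ _ _ _ [e' [He' Hb]]. exists (ULam e').
    split; [apply ht_lam; exact He' | apply bee_lam; exact Hb].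
  - intros G e1 e2 A C _ [t1 [Ht1 Hb1]] _ Happl.
    destruct (Happl t1 Ht1) as [t' [Ht' Hb]]. exists t'. split; [exact Ht'|].
    eapply bee_trans; [exact Hb|]. apply bee_app; [exact Hb1 | apply bee_refl].
  - intros G e A C tau Hwf Hmono _ Happl t Ht.
    apply Happl. eapply ht_inst; eassumption.
  - intros G e A C _ [e' [He' Hb]] t Ht. exists (UApp t e').
    split; [eapply ht_app; eassumption | apply bee_app; [apply bee_refl | exact Hb]].
Qed.

Theorem mainTheorem2 : forall (G : ctx), wf_ctx G ->
  (forall (e : tm) (A : ty), chk G e A ->
     exists e' : utm, has_type G e' A /\ beta_eta_eq e' (erase e)) /\
  (forall (e : tm) (A : ty), syn G e A ->
     exists e' : utm, has_type G e' A /\ beta_eta_eq e' (erase e)).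
Proof.
  intros G _.
  destruct bidirectional_elaborates as [Hchk [Hsyn _]].
  split; [apply Hchk | apply Hsyn].
Qed.
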